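(* Let $T$ be the operator on $H^2$ given by $Tf=\sum_{m=0}^\infty\left(\sum_{n=0}^\infty n!\,\hat f(n+m)\right)z^m$, with domain $D(T)=\{f\in H^2: Tf\in H^2\}$ (i.e. those $f$ for which every inner series converges and the resulting coefficient sequence is square summable). Then $D(T)$ is not shift invariant: there exists $f\in D(T)$ with $zf\notin D(T)$.
   Context: $H^2$ is the Hardy space of analytic functions $f(z)=\sum_{n\ge0}\hat f(n)z^n$ on the unit disc with $\sum|\hat f(n)|^2<\infty$. *)

From Stdlib Require Import Reals Arith.
From Coquelicot Require Import Coquelicot.
Open Scope R_scope.

(* An element of H^2 is identified with its Taylor coefficient sequence
   a : nat -> C, a n = \hat f(n). *)
Definition inH2 (a : nat -> C) : Prop :=
  ex_series (fun n => (Cmod (a n)) ^ 2).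

Definition T_term (a : nat -> C) (m n : nat) : C :=
  Cmult (RtoC (INR (Factorial.fact n))) (a (n + m)%nat).

Definition is_T (a b : nat -> C) : Prop :=
  forall m : nat, is_series (T_term a m) (b m).

Definition in_domT (a : nat -> C) : Prop :=
  inH2 a /\ exists b : nat -> C, is_T a b /\ inH2 b.

Definition shiftz (a : nat -> C) : nat -> C :=
  fun k => match k with O => RtoC 0 | S k' => a k' end.

From Stdlib Require Import Reals Lra Lia Factorial.
From Coquelicot Require Import Coquelicot.
Open Scope R_scope.

(* Take f^(n) = 1/(n+2)!.  Since (n+2)! m! <= (n+m+2)!, the m-th coefficient of
   Tf is sum_n n!/(n+m+2)! <= (1/m!) sum_n (1/(n+1) - 1/(n+2)) = 1/m!, so f and
   Tf are in H^2.  For zf the 0-th coefficient of T(zf) would be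
   sum_{n>=1} n!/(n+1)! = sum_{n>=1} 1/(n+1), a divergent harmonic series. *)

Lemma sum_n_Re (a : nat -> C) n : sum_n (fun k => Re (a k)) n = Re (sum_n a n).
Proof.
  induction n as [|n IH]; first [now rewrite !sum_O | now rewrite !sum_Sn, IH].
Qed.

Lemma sum_n_RtoC (f : nat -> R) n : sum_n (fun k => RtoC (f k)) n = RtoC (sum_n f n).
Proof.
  induction n as [|n IH]; [now rewrite !sum_O|].
  rewrite !sum_Sn, IH. symmetry. apply RtoC_plus.
Qed.

Lemma is_series_Re (a : nat -> C) l :
  is_series a l -> is_series (fun k => Re (a k)) (Re l).
Proof.
  intros Hl. unfold is_series.
  apply filterlim_ext with (fun n => Re (sum_n a n)); [intros n; now rewrite sum_n_Re|].
  apply filterlim_comp with (locally l); [exact Hl|].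
  intros P [eps HP]. exists eps. intros z [Hz _]. now apply HP.
Qed.

Lemma is_series_RtoC (f : nat -> R) l :
  is_series f l -> is_series (fun k => RtoC (f k)) (RtoC l).
Proof.
  intros Hl. unfold is_series.
  apply filterlim_ext with (fun n => RtoC (sum_n f n)); [intros n; now rewrite sum_n_RtoC|].
  apply filterlim_comp with (locally l); [exact Hl|].
  intros P [eps HP]. exists eps. intros x Hx. apply HP.
  split; [exact Hx | apply ball_center].
Qed.

Lemma sum_n_m_ge_const (f : nat -> R) c n m :
  (forall k, (n <= k <= m)%nat -> c <= f k) -> INR (S m - n) * c <= sum_n_m f n m.
Proof.
  intros Hc. rewrite <- sum_n_m_const.
  rewrite (sum_n_m_ext_loc f (fun k => Rmax c (f k))).
  - apply sum_n_m_le. intros k. apply Rmax_l.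
  - intros k Hk. symmetry. now apply Rmax_right, Hc.
Qed.

Lemma harmonic_not_ex_series : ~ ex_series (fun k => / INR (S k)).
Proof.
  intros Hex.
  destruct (Cauchy_ex_series _ Hex (mkposreal (1/2) ltac:(lra))) as [N HN].
  specialize (HN (S N) (S N + N)%nat ltac:(lia) ltac:(lia)); cbn [pos] in HN.
  change norm with Rabs in HN.
  assert (Hhalf : 1/2 <= sum_n_m (fun k => / INR (S k)) (S N) (S N + N)).
  { eapply Rle_trans; [|apply (sum_n_m_ge_const _ (/ INR (S (S N + N))))].
    - replace (S (S N + N) - S N)%nat with (S N) by lia.
      rewrite <- Rdiv_def. apply Req_le. rewrite !S_INR, plus_INR, S_INR.
      pose proof (pos_INR N). field. lra.
    - intros k Hk. apply Rinv_le_contravar; [apply lt_0_INR; lia | apply le_INR; lia]. }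
  apply (Rlt_irrefl (1/2)). eapply Rle_lt_trans; [|exact HN].
  eapply Rle_trans; [exact Hhalf | apply Rle_abs].
Qed.

Lemma telescoping_is_series :
  is_series (fun n => / (INR n + 1) - / (INR n + 2)) 1.
Proof.
  unfold is_series.
  apply filterlim_ext with (fun n => 1 - / (INR n + 2)).
  { intros n. induction n as [|n IH].
    - rewrite sum_O. simpl. field.
    - rewrite sum_Sn, <- IH, S_INR. change plus with Rplus.
      pose proof (pos_INR n). field. lra. }
  enough (Hlim : is_lim_seq (fun n => 1 - / (INR n + 2)) (1 - 0))
    by now rewrite Rminus_0_r in Hlim.
  apply (is_lim_seq_minus' _ _ 1 0); [apply is_lim_seq_const|].
  apply (is_lim_seq_inv _ p_infty); [|discriminate].
  eapply is_lim_seq_plus; [apply is_lim_seq_INR | apply is_lim_seq_const | reflexivity].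
Qed.

Lemma fact_mul_le n m : (fact n * fact m <= fact (n + m))%nat.
Proof.
  induction m as [|m IH]; [rewrite Nat.add_0_r; simpl; lia|].
  rewrite Nat.add_succ_r, !fact_simpl. nia.
Qed.

Lemma ex_series_inv_fact : ex_series (fun n => / INR (fact n)).
Proof.
  apply ex_series_ext with (fun n => / INR (fact n) * 1 ^ n).
  { intros n. now rewrite pow1, Rmult_1_r. }
  apply ex_pseries_R. exists (exp 1). apply is_exp_Reals.
Qed.

Lemma ex_series_inv_fact_sq : ex_series (fun n => (/ INR (fact n)) ^ 2).
Proof.
  apply (ex_series_le (V := R_CompleteNormedModule)) with (fun n => / INR (fact n));
    [|exact ex_series_inv_fact].
  intros n. change norm with Rabs.
  assert (Hpos : 0 < / INR (fact n)) by apply Rinv_0_lt_compat, INR_fact_lt_0.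
  assert (Hle1 : / INR (fact n) <= 1).
  { rewrite <- Rinv_1. apply Rinv_le_contravar; [lra|].
    apply (le_INR 1), lt_O_fact. }
  rewrite Rabs_pos_eq by (apply pow_le; lra).
  simpl. nra.
Qed.

Lemma inH2_le (a : nat -> C) (u : nat -> R) :
  (forall n, Cmod (a n) <= u n) -> ex_series (fun n => u n ^ 2) -> inH2 a.
Proof.
  intros Hle Hu. apply (ex_series_le (V := R_CompleteNormedModule)) with (fun n => u n ^ 2);
    [|exact Hu].
  intros n. change norm with Rabs. pose proof (Cmod_ge_0 (a n)).
  rewrite Rabs_pos_eq by (apply pow_le; lra).
  apply pow_incr. split; [lra | apply Hle].
Qed.

Definition inv_fact_SS (n : nat) : C := RtoC (/ INR (fact (n + 2))).

Definition T_row_inv_fact_SS (m n : nat) : R := INR (fact n) / INR (fact (n + m + 2)).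

Lemma T_row_inv_fact_SS_bound m n :
  0 <= T_row_inv_fact_SS m n <= / INR (fact m) * (/ (INR n + 1) - / (INR n + 2)).
Proof.
  unfold T_row_inv_fact_SS.
  pose proof (INR_fact_lt_0 n). pose proof (INR_fact_lt_0 m).
  pose proof (INR_fact_lt_0 (n + m + 2)). pose proof (pos_INR n).
  split; [apply Rdiv_le_0_compat; lra|].
  assert (Hfact : INR (fact (n + 2)) * INR (fact m) <= INR (fact (n + m + 2))).
  { rewrite <- mult_INR. apply le_INR. replace (n + m + 2)%nat with (n + 2 + m)%nat by lia.
    apply fact_mul_le. }
  replace (/ INR (fact m) * (/ (INR n + 1) - / (INR n + 2)))
    with (INR (fact n) / (INR (fact (n + 2)) * INR (fact m))).
  - apply Rmult_le_compat_l; [lra|].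
    apply Rinv_le_contravar; [|exact Hfact].
    apply Rmult_lt_0_compat; apply INR_fact_lt_0.
  - replace (n + 2)%nat with (S (S n)) by lia.
    rewrite !fact_simpl, !mult_INR, !S_INR. field. lra.
Qed.

Lemma T_row_inv_fact_SS_series m :
  ex_series (T_row_inv_fact_SS m) /\
  0 <= Series (T_row_inv_fact_SS m) <= / INR (fact m).
Proof.
  set (major := fun n => / INR (fact m) * (/ (INR n + 1) - / (INR n + 2))).
  assert (Hmajor : is_series major (/ INR (fact m))).
  { rewrite <- (Rmult_1_r (/ INR (fact m))).
    apply (is_series_scal_l (V := R_NormedModule)), telescoping_is_series. }
  assert (Hex : ex_series (T_row_inv_fact_SS m)).
  { apply (ex_series_le (V := R_CompleteNormedModule)) with major; [|eexists; exact Hmajor].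
    intros n. change norm with Rabs. destruct (T_row_inv_fact_SS_bound m n).
    rewrite Rabs_pos_eq; assumption. }
  split; [exact Hex | split].
  - replace 0 with (Series (fun n => 0 * T_row_inv_fact_SS m n)) at 1
      by (rewrite Series_scal_l; ring).
    apply Series_le; [|exact Hex].
    intros n. destruct (T_row_inv_fact_SS_bound m n). lra.
  - rewrite <- (is_series_unique _ _ Hmajor).
    apply Series_le; [apply T_row_inv_fact_SS_bound | eexists; exact Hmajor].
Qed.

Lemma inv_fact_SS_in_domT : in_domT inv_fact_SS.
Proof.
  split.
  - apply inH2_le with (fun n => / INR (fact n)); [|exact ex_series_inv_fact_sq].
    intros n. unfold inv_fact_SS. rewrite Cmod_R.
    pose proof (INR_fact_lt_0 n).
    rewrite Rabs_pos_eq by (left; apply Rinv_0_lt_compat, INR_fact_lt_0).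
    apply Rinv_le_contravar; [lra | apply le_INR, fact_le; lia].
  - exists (fun m => RtoC (Series (T_row_inv_fact_SS m))). split.
    + intros m. destruct (T_row_inv_fact_SS_series m) as [Hex _].
      apply is_series_ext with (fun n => RtoC (T_row_inv_fact_SS m n)).
      { intros n. unfold T_term, inv_fact_SS, T_row_inv_fact_SS, Rdiv. now rewrite RtoC_mult. }
      apply is_series_RtoC, Series_correct, Hex.
    + apply inH2_le with (fun m => / INR (fact m)); [|exact ex_series_inv_fact_sq].
      intros m. destruct (T_row_inv_fact_SS_series m) as [_ Hbound].
      rewrite Cmod_R, Rabs_pos_eq; apply Hbound.
Qed.

Lemma T_term_shiftz_inv_fact_SS n :
  T_term (shiftz inv_fact_SS) 0 (S n) = RtoC (/ INR (S (S n))).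
Proof.
  unfold T_term, inv_fact_SS. simpl shiftz. rewrite Nat.add_0_r, <- RtoC_mult. f_equal.
  replace (n + 2)%nat with (S (S n)) by lia.
  rewrite (fact_simpl (S n)), mult_INR.
  pose proof (INR_fact_lt_0 (S n)). pose proof (lt_0_INR (S (S n)) ltac:(lia)).
  field. lra.
Qed.

Lemma shiftz_inv_fact_SS_not_in_domT : ~ in_domT (shiftz inv_fact_SS).
Proof.
  intros [_ [b [HTb _]]].
  apply harmonic_not_ex_series, ex_series_incr_1.
  apply ex_series_ext with (fun n => Re (T_term (shiftz inv_fact_SS) 0 (S n))).
  { intros n. now rewrite T_term_shiftz_inv_fact_SS. }
  apply (ex_series_incr_1 (fun n => Re (T_term (shiftz inv_fact_SS) 0 n))).
  eexists. apply is_series_Re, HTb.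
Qed.

Theorem corollary2 :
  exists a : nat -> C, in_domT a /\ ~ in_domT (shiftz a).
Proof.
  exists inv_fact_SS.
  split; [exact inv_fact_SS_in_domT | exact shiftz_inv_fact_SS_not_in_domT].
Qed.
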